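(* Let $\mathcal{A}$ be an algebra in a functional language $\mathcal{L}$, $\mathcal{B}$ an $\mathcal{A}$-algebra, and $\Lambda$ a direct system of formulas in $\mathcal{L}_{\mathcal{A}}$ such that every formula of $\Lambda$ is realizable in $\mathcal{B}$. Then the limit algebra $\mathcal{B}_\Lambda=L(\Lambda)$ is an $\mathcal{A}$-algebra, i.e. $\mathcal{B}_\Lambda\models\mathrm{Diag}(\mathcal{A})$.
   Context: Functional language: operation symbols $F$ (arity $n_F$) and constants only. $\mathcal{L}_{\mathcal{A}}=\mathcal{L}\cup\{c_a:a\in A\}$. $\mathrm{Diag}(\mathcal{A})$ is the set of atomic $\mathcal{L}_{\mathcal{A}}$-sentences and negations of atomic $\mathcal{L}_{\mathcal{A}}$-sentences true in $\mathcal{A}$ (with $c_a$ interpreted as $a$); an $\mathcal{A}$-algebra is an $\mathcal{L}_{\mathcal{A}}$-algebra satisfying $\mathrm{Diag}(\mathcal{A})$ (equivalently, $a\mapsto c_a$ is an embedding of $\mathcal{A}$). For a functional language $\mathcal{L}^*$ (here $\mathcal{L}^*=\mathcal{L}_{\mathcal{A}}$): a diagram-formula in a finite reduct $\mathcal{L}'$ in finite variables $X$ is a conjunction of atomic formulas and negations such that $\neg(x=y)$ is a conjunct for distinct $x,y\in X$, for each $F\in\mathcal{L}'$ and $(x_0,\dots,x_{n_F})\in X^{n_F+1}$ exactly one of $F(x_1,\dots,x_{n_F})=x_0$ and its negation is a conjunct, and for each constant $c\in\mathcal{L}'$ and $x\in X$ exactly one of $x=c$, $\neg(x=c)$ is a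 conjunct. A direct system of formulas $\Lambda=(I,\varphi_i,\gamma_{ij})$: $(I,\le)$ directed; $\varphi_i$ consistent diagram-formulas in finite reducts $\mathcal{L}_i\subseteq\mathcal{L}^*$ and finite variables $X_i$; maps $\gamma_{ij}:X_i\to X_j$ ($i\le j$) with $\gamma_{ii}=\mathrm{id}$, $\gamma_{jk}\gamma_{ij}=\gamma_{ik}$, conjuncts of $\varphi_i(\gamma_{ij}(X_i))$ are conjuncts of $\varphi_j$; every constant of $\mathcal{L}^*$ appears in a conjunct $x=c$ of some $\varphi_i$; for every $F,i,(x_1,\dots,x_{n_F})\in X_i^{n_F}$ some $j\ge i$ has a conjunct $F(\gamma_{ij}(x_1),\dots)=x_j$. The limit algebra $L(\Lambda)$ (an $\mathcal{L}^*$-algebra) has universe $\{(x,i):x\in X_i\}/\!\equiv$, $(x,i)\equiv(y,j)$ iff $\gamma_{ik}(x)=\gamma_{jk}(y)$ for some $k\ge i,j$, with constants and operations read off from the conjuncts $x=c$ and $F(\dots)=x_j$. $\varphi_i$ is realizable in $\mathcal{B}$ if it is true under some assignment $X_i\to B$. *)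

From Stdlib Require Import List ClassicalEpsilon.
From mathcomp Require Import all_boot.

Unset Printing Implicit Defensive.

Record language := Language {
  op  : Type;
  ar  : op -> nat;
  cst : Type
}.

Arguments ar {_} _.

Record algebra (L : language) := Algebra {
  carrier :> Type;
  interp_op  : forall F : op L, ('I_(ar F) -> carrier) -> carrier;
  interp_cst : cst L -> carrier
}.

Arguments carrier {_} _.
Arguments interp_op {_} _ _ _.
Arguments interp_cst {_} _ _.

(* L_A = L together with a new constant c_a for each a in A
   (constants of L_A: inl c = old constant c, inr a = c_a). *)
Definition expand (L : language) (A : algebra L) : language :=
  {| op := op L; ar := @ar L; cst := (cst L + carrier A)%type |}.

Arguments expand {L} A.

Definition diag_alg (L : language) (A : algebra L) : algebra (expand A) :=
  @Algebra (expand A) (carrier A) (@interp_op L A)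
    (fun c : (cst L + carrier A)%type =>
       match c with inl c0 => interp_cst A c0 | inr a => a end).

Inductive term (L : language) (V : Type) : Type :=
| tVar : V -> term L V
| tCst : cst L -> term L V
| tApp : forall F : op L, ('I_(ar F) -> term L V) -> term L V.

Arguments tVar {L V} _.
Arguments tCst {L V} _.
Arguments tApp {L V} _ _.

Arguments diag_alg {L} A.

Fixpoint eval (L : language) (M : algebra L) (V : Type) (s : V -> M)
  (t : term L V) : M :=
  match t with
  | tVar v => s v
  | tCst c => interp_cst M c
  | tApp F ts => interp_op M F (fun k => @eval L M V s (ts k))
  end.

Arguments eval {L} M {V} s t.

Fixpoint rename (L : language) (V W : Type) (f : V -> W) (t : term L V)
  : term L W :=
  match t with
  | tVar v => tVar (f v)
  | tCst c => tCst c
  | tApp F ts => tApp F (fun k => rename L V W f (ts k))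
  end.

(* A literal: an atomic formula (lhs = rhs) if pos = true,
   its negation ~(lhs = rhs) if pos = false. *)
Record literal (L : language) (V : Type) := Lit {
  pos : bool; lhs : term L V; rhs : term L V }.

Arguments Lit {L V} _ _ _.

Arguments rename {L V W} f t.
Arguments Lit {L V} _ _ _.
Arguments pos {_ _} _.
Arguments lhs {_ _} _.
Arguments rhs {_ _} _.

Definition sat_lit (L : language) (M : algebra L) (V : Type) (s : V -> M)
  (l : literal L V) : Prop :=
  if pos l then eval M s (lhs l) = eval M s (rhs l)
  else eval M s (lhs l) <> eval M s (rhs l).

Arguments sat_lit {L} M {V} s l.

Definition rename_lit (L : language) (V W : Type) (f : V -> W)
  (l : literal L V) : literal L W :=
  Lit (pos l) (rename f (lhs l)) (rename f (rhs l)).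

Arguments rename_lit {L V W} f l.

(* A conjunction of literals is represented by the list of its conjuncts. *)
Definition conj_formula (L : language) (V : Type) := list (literal L V).

Arguments conj_formula : clear implicits.

Definition sat_formula (L : language) (M : algebra L) (V : Type) (s : V -> M)
  (phi : conj_formula L V) : Prop :=
  forall l, In l phi -> sat_lit M s l.

Arguments sat_formula {L} M {V} s phi.

Definition no_var (T : Type) (e : Empty_set) : T := match e with end.

Definition sentence_true (L : language) (M : algebra L)
  (l : literal L Empty_set) : Prop := sat_lit M (@no_var M) l.

(* M |= Diag(A): every atomic L_A-sentence true in A, and every negation of
   an atomic L_A-sentence true in A, is true in M. *)
Arguments sentence_true {L} M l.

Definition is_A_algebra (L : language) (A : algebra L)
  (M : algebra (expand A)) : Prop :=
  forall l : literal (expand A) Empty_set,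
    sentence_true (diag_alg A) l -> sentence_true M l.

Record reduct (L : language) := Reduct {
  r_op : op L -> Prop; r_cst : cst L -> Prop }.

Arguments r_op {_} _ _.
Arguments r_cst {_} _ _.

Definition finite_pred (T : Type) (P : T -> Prop) : Prop :=
  exists s : list T, forall x, P x -> In x s.

Arguments finite_pred {T} P.

Definition finite_reduct (L : language) (R : reduct L) : Prop :=
  finite_pred (r_op R) /\ finite_pred (r_cst R).

Arguments finite_reduct {L} R.

Fixpoint term_in (L : language) (R : reduct L) (V : Type) (t : term L V)
  : Prop :=
  match t with
  | tVar _ => True
  | tCst c => r_cst R c
  | tApp F ts => r_op R F /\ forall k, term_in L R V (ts k)
  end.

Definition xorP (P Q : Prop) : Prop := (P /\ ~ Q) \/ (~ P /\ Q).

Arguments term_in {L} R {V} t.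

Definition diagram_formula (L : language) (R : reduct L) (X : finType)
  (phi : conj_formula L X) : Prop :=
  [/\ finite_reduct R,
      (forall l, In l phi -> term_in R (lhs l) /\ term_in R (rhs l)),
      (forall x y : X, x <> y -> In (Lit false (tVar x) (tVar y)) phi),
      (forall F : op L, r_op R F ->
         forall (x0 : X) (xs : 'I_(ar F) -> X),
           xorP (In (Lit true (tApp F (fun k => tVar (xs k))) (tVar x0)) phi)
                (In (Lit false (tApp F (fun k => tVar (xs k))) (tVar x0)) phi))
    & (forall c : cst L, r_cst R c -> forall x : X,
           xorP (In (Lit true (tVar x) (tCst c)) phi)
                (In (Lit false (tVar x) (tCst c)) phi))].

Arguments diagram_formula {L} R {X} phi.

Definition consistent (L : language) (V : Type) (phi : conj_formula L V)
  : Prop :=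
  exists (M : algebra L) (s : V -> M), sat_formula M s phi.

Arguments consistent {L V} phi.

Definition realizable (L : language) (M : algebra L) (V : Type)
  (phi : conj_formula L V) : Prop :=
  exists s : V -> M, sat_formula M s phi.

Arguments realizable {L} M {V} phi.

(* The maps gamma i j are given for all i j, but only used for i <= j.    *)
Record dsystem (L : language) := DSystem {
  ds_I : Type;
  ds_le : ds_I -> ds_I -> Prop;
  ds_X : ds_I -> finType;
  ds_R : ds_I -> reduct L;
  ds_phi : forall i, conj_formula L (ds_X i);
  ds_gamma : forall i j, ds_X i -> ds_X j
}.

Arguments ds_I {_} _.
Arguments ds_le {_} _ _ _.
Arguments ds_X {_} _ _.
Arguments ds_R {_} _ _.
Arguments ds_phi {_} _ _.
Arguments ds_gamma {_} _ _ _ _.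

Definition is_direct_system (L : language) (D : dsystem L) : Prop :=
  let le := ds_le D in
  let X := ds_X D in
  let phi := ds_phi D in
  let g := ds_gamma D in
  (forall i, le i i) /\
      (forall i j k, le i j -> le j k -> le i k) /\
      (forall i j, exists k, le i k /\ le j k) /\
      (forall i, diagram_formula (ds_R D i) (phi i) /\ consistent (phi i)) /\
      (forall i (x : X i), g i i x = x) /\
      (forall i j k, le i j -> le j k -> forall x : X i,
          g j k (g i j x) = g i k x) /\
      (forall i j, le i j -> forall l, In l (phi i) ->
          In (rename_lit (g i j) l) (phi j)) /\
      (forall c : cst L, exists i (x : X i), In (Lit true (tVar x) (tCst c)) (phi i)) /\
    (forall (F : op L) i (xs : 'I_(ar F) -> X i), exists j, le i j /\
          exists xj : X j,
            In (Lit true (tApp F (fun k => tVar (g i j (xs k)))) (tVar xj)) (phi j)).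

Section Limit.
Variables (L : language) (D : dsystem L).

Definition lim_pt := {i : ds_I D & ds_X D i}.

Definition lim_equiv (u v : lim_pt) : Prop :=
  exists k, [/\ ds_le D (projT1 u) k, ds_le D (projT1 v) k &
                ds_gamma D (projT1 u) k (projT2 u) = ds_gamma D (projT1 v) k (projT2 v)].

Definition lim_carrier : Type :=
  {P : lim_pt -> Prop | exists u, P = lim_equiv u}.

Definition lim_cls (u : lim_pt) : lim_carrier :=
  exist _ (lim_equiv u) (ex_intro _ u erefl).

Variable hQ : inhabited lim_carrier.

Definition lim_cst (c : cst L) : lim_carrier :=
  epsilon hQ (fun q => exists i (x : ds_X D i),
     In (Lit true (tVar x) (tCst c)) (ds_phi D i) /\ q = lim_cls (existT _ i x)).

Definition lim_op (F : op L) (qs : 'I_(ar F) -> lim_carrier) : lim_carrier :=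
  epsilon hQ (fun q => exists (idx : 'I_(ar F) -> ds_I D)
       (xs : forall k, ds_X D (idx k)) (j : ds_I D) (x0 : ds_X D j),
     [/\ (forall k, qs k = lim_cls (existT _ (idx k) (xs k))),
         (forall k, ds_le D (idx k) j),
         In (Lit true (tApp F (fun k => tVar (ds_gamma D (idx k) j (xs k))))
                      (tVar x0)) (ds_phi D j)
       & q = lim_cls (existT _ j x0)]).

Definition limit_algebra : algebra L :=
  {| carrier := lim_carrier; interp_op := lim_op; interp_cst := lim_cst |}.

End Limit.

Arguments lim_pt {L} D.
Arguments lim_equiv {L} D u v.
Arguments lim_carrier {L} D.
Arguments lim_cls {L} D u.
Arguments lim_cst {L} D hQ c.
Arguments lim_op {L} D hQ F qs.
Arguments limit_algebra {L} D hQ.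
Arguments is_A_algebra {L} A M.
Arguments is_direct_system {L} D.

From Stdlib Require Import List ClassicalEpsilon FunctionalExtensionality
  PropExtensionality ProofIrrelevance.
From mathcomp Require Import all_boot.

(* Say a closed term t is computed to x in phi_i when phi_i contains the chain
   of conjuncts c = x and F(x_1,...,x_n) = x evaluating t bottom-up. Every
   closed term is computed at some stage, and its value in L(Lambda) is then the
   class of (x, i), while in any algebra realizing phi_i under s it is s x.
   So a closed equation holds in L(Lambda) iff it holds in B: compute both sides
   at a common stage k; equal classes become equal variables at a later stage m,
   whose realization in B gives equal values, and distinct variables at stage k
   carry the conjunct x <> y of the diagram formula, whose realization in B
   gives distinct values. *)

Section DirectSystem.

Variables (L : language) (D : dsystem L).

Local Notation le := (ds_le D).
Local Notation gamma := (ds_gamma D).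
Local Notation phi := (ds_phi D).

Inductive computes (i : ds_I D) : term L Empty_set -> ds_X D i -> Prop :=
| computes_cst c x :
    In (Lit true (tVar x) (tCst c)) (phi i) -> computes i (tCst c) x
| computes_app F ts xs x :
    (forall k, computes i (ts k) (xs k)) ->
    In (Lit true (tApp F (fun k => tVar (xs k))) (tVar x)) (phi i) ->
    computes i (tApp F ts) x.

Lemma computes_eval {M : algebra L} {i} {s : ds_X D i -> M} {t x} :
  sat_formula M s (phi i) -> computes i t x -> eval M (@no_var M) t = s x.
Proof.
move=> Hs; elim=> [c y Hin | F ts xs y _ IH Hin]; have := Hs _ Hin; rewrite /sat_lit //=.
move=> <-; congr (interp_op M F); apply: functional_extensionality => k; exact: IH.
Qed.

Hypothesis HD : is_direct_system D.

Lemma ds_le_refl i : le i i.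
Proof. by case: HD. Qed.

Lemma ds_le_trans i j k : le i j -> le j k -> le i k.
Proof. by case: HD => _ [Htrans _]; exact: Htrans. Qed.

Lemma ds_directed i j : exists k, le i k /\ le j k.
Proof. by case: HD => _ [_ [Hdir _]]; exact: Hdir. Qed.

Lemma ds_diag_neq i (x y : ds_X D i) : x <> y -> In (Lit false (tVar x) (tVar y)) (phi i).
Proof. by case: HD => _ [_ [_ [/(_ i) [[_ _ Hneq _ _] _] _]]]; exact: Hneq. Qed.

Lemma ds_gamma_id i (x : ds_X D i) : gamma i i x = x.
Proof. by case: HD => _ [_ [_ [_ [Hid _]]]]; exact: Hid. Qed.

Lemma ds_gamma_comp {i j k} :
  le i j -> le j k -> forall x : ds_X D i, gamma j k (gamma i j x) = gamma i k x.
Proof. by case: HD => _ [_ [_ [_ [_ [Hcomp _]]]]]; exact: Hcomp. Qed.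

Lemma ds_phi_rename i j l : le i j -> In l (phi i) -> In (rename_lit (gamma i j) l) (phi j).
Proof. by move=> Hij; case: HD => _ [_ [_ [_ [_ [_ [Hren _]]]]]]; exact: Hren Hij l. Qed.

Lemma ds_cst_named c : exists i (x : ds_X D i), In (Lit true (tVar x) (tCst c)) (phi i).
Proof. by case: HD => _ [_ [_ [_ [_ [_ [_ [Hcst _]]]]]]]; exact: Hcst. Qed.

Lemma ds_app_named F {i} (xs : 'I_(ar F) -> ds_X D i) :
  exists j, le i j /\ exists x0 : ds_X D j,
    In (Lit true (tApp F (fun k => tVar (gamma i j (xs k)))) (tVar x0)) (phi j).
Proof. by case: HD => _ [_ [_ [_ [_ [_ [_ [_ Hop]]]]]]]; exact: Hop. Qed.

Lemma ds_upper_bound i0 {n} (f : 'I_n -> ds_I D) :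
  exists j, le i0 j /\ forall k, le (f k) j.
Proof.
elim: n f => [|n IH] f; first by exists i0; split=> [|[]]; [exact: ds_le_refl|].
have [j1 [Hi0 Hj1]] := IH (fun k => f (lift ord0 k)).
have [j [H1 H2]] := ds_directed j1 (f ord0).
exists j; split; first exact: ds_le_trans Hi0 H1.
by move=> k; case: (unliftP ord0 k) => [k' ->|->] //; exact: ds_le_trans (Hj1 k') H1.
Qed.

Lemma computes_gamma {i j t x} : le i j -> computes i t x -> computes j t (gamma i j x).
Proof.
move=> Hij; elim=> [c y Hin | F ts xs y _ IH Hin].
  by apply: computes_cst; exact: ds_phi_rename Hij Hin.
by apply: (computes_app _ _ _ (fun k => gamma i j (xs k))) => //; exact: ds_phi_rename Hij Hin.
Qed.

Lemma app_gamma_comp {F} {ps : 'I_(ar F) -> lim_pt D} {i j} :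
  (forall k, le (projT1 (ps k)) i) -> le i j ->
  @tApp L (ds_X D j) F
    (fun k => tVar (gamma i j (gamma (projT1 (ps k)) i (projT2 (ps k))))) =
  tApp F (fun k => tVar (gamma (projT1 (ps k)) j (projT2 (ps k)))).
Proof.
move=> Hps Hij; congr tApp; apply: functional_extensionality => k.
by rewrite (ds_gamma_comp (Hps k) Hij).
Qed.

Lemma lim_equiv_trans u v w : lim_equiv D u v -> lim_equiv D v w -> lim_equiv D u w.
Proof.
move=> [k1 [Hu1 Hv1 E1]] [k2 [Hv2 Hw2 E2]].
have [k [H1 H2]] := ds_directed k1 k2.
exists k; split; [exact: ds_le_trans Hu1 H1 | exact: ds_le_trans Hw2 H2 |].
by rewrite -(ds_gamma_comp Hu1 H1) E1 (ds_gamma_comp Hv1 H1)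
  -(ds_gamma_comp Hv2 H2) E2 (ds_gamma_comp Hw2 H2).
Qed.

Lemma lim_equiv_sym u v : lim_equiv D u v -> lim_equiv D v u.
Proof. by move=> [k [H1 H2 E]]; exists k. Qed.

Lemma lim_cls_eqP u v : lim_cls D u = lim_cls D v <-> lim_equiv D u v.
Proof.
split=> [/(f_equal (@proj1_sig _ _)) /= -> | Huv].
  by exists (projT1 v); split=> //; exact: ds_le_refl.
apply: eq_sig_hprop => [? ? ?|/=]; first exact: proof_irrelevance.
apply: functional_extensionality => w; apply: propositional_extensionality.
by split; apply: lim_equiv_trans; [exact: lim_equiv_sym|].
Qed.

Lemma lim_clsP (q : lim_carrier D) : exists u, q = lim_cls D u.
Proof.
case: q => P [u EP]; exists u; subst P.
by apply: eq_sig_hprop => [? ? ?|//]; exact: proof_irrelevance.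
Qed.

Lemma lim_cls_gamma {i j} x :
  le i j -> lim_cls D (existT _ i x) = lim_cls D (existT _ j (gamma i j x)).
Proof.
move=> Hij; apply/lim_cls_eqP; exists j.
by split=> //=; [exact: ds_le_refl | rewrite ds_gamma_id].
Qed.

Lemma computes_repr i t x j y :
  computes i t x -> lim_cls D (existT _ i x) = lim_cls D (existT _ j y) ->
  exists m, le j m /\ computes m t (gamma j m y).
Proof.
move=> Ht /lim_cls_eqP [m [/= Him Hjm E]].
by exists m; split=> //; rewrite -E; exact: computes_gamma.
Qed.

Lemma computes_family {F : op L} (ts : 'I_(ar F) -> term L Empty_set)
    (ps ps' : 'I_(ar F) -> lim_pt D) j' :
  (forall k, computes (projT1 (ps k)) (ts k) (projT2 (ps k))) ->
  (forall k, lim_cls D (ps k) = lim_cls D (ps' k)) ->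
  exists j, le j' j /\ forall k, computes j (ts k) (gamma (projT1 (ps' k)) j (projT2 (ps' k))).
Proof.
move=> Hts Hcls.
have /choice [m Hm] : forall k, exists m, le (projT1 (ps' k)) m /\
    computes m (ts k) (gamma (projT1 (ps' k)) m (projT2 (ps' k))).
  move=> k; apply: computes_repr (Hts k) _.
  by case: (ps k) (ps' k) (Hcls k) => ? ? [].
have [j [Hj Hmj]] := ds_upper_bound j' m.
exists j; split=> // k; have [Hle Hcomp] := Hm k.
by rewrite -(ds_gamma_comp Hle (Hmj k)); exact: computes_gamma.
Qed.

Variable hQ : inhabited (lim_carrier D).

Local Notation LD := (limit_algebra D hQ).

Lemma ds_I_inhabited : inhabited (ds_I D).
Proof. by case: hQ => q; have [u _] := lim_clsP q; constructor; exact: projT1 u. Qed.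

Lemma lim_cst_spec c : exists i (x : ds_X D i),
  In (Lit true (tVar x) (tCst c)) (phi i) /\ lim_cst D hQ c = lim_cls D (existT _ i x).
Proof.
apply: (epsilon_spec hQ (fun q => exists i x, _ /\ q = _)).
by have [i [x Hin]] := ds_cst_named c; exists (lim_cls D (existT _ i x)), i, x.
Qed.

Lemma lim_op_spec F (qs : 'I_(ar F) -> lim_carrier D) :
  exists (ps : 'I_(ar F) -> lim_pt D) j (x0 : ds_X D j),
  [/\ forall k, qs k = lim_cls D (ps k), forall k, le (projT1 (ps k)) j,
      In (Lit true (tApp F (fun k => tVar (gamma (projT1 (ps k)) j (projT2 (ps k)))))
                   (tVar x0)) (phi j)
    & lim_op D hQ F qs = lim_cls D (existT _ j x0)].
Proof.
rewrite /lim_op; set P := (X in epsilon _ X).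
suff /(epsilon_spec hQ P) [idx [xs [j [x0 [Hqs Hle Hin ->]]]]] : exists q, P q.
  by exists (fun k => existT _ (idx k) (xs k)), j, x0.
have [ps Hps] := choice _ (fun k => lim_clsP (qs k)).
have [i0] := ds_I_inhabited.
have [j0 [_ Hj0]] := ds_upper_bound i0 (fun k => projT1 (ps k)).
have [j [Hj [x0 Hin]]] := ds_app_named F (fun k => gamma (projT1 (ps k)) j0 (projT2 (ps k))).
exists (lim_cls D (existT _ j x0)), (fun k => projT1 (ps k)), (fun k => projT2 (ps k)), j, x0.
split=> // [k | k |]; first by case: (ps k) (Hps k).
  exact: ds_le_trans (Hj0 k) Hj.
by rewrite -(app_gamma_comp Hj0 Hj).
Qed.

Lemma limit_eval_computes t :
  exists i x, computes i t x /\ eval LD (@no_var LD) t = lim_cls D (existT _ i x).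
Proof.
elim: t => [[] | c | F ts IH].
  have [i [x [Hin E]]] := lim_cst_spec c.
  by exists i, x; split; [exact: computes_cst|].
have /choice [ps Hps] : forall k, exists p : lim_pt D,
    computes (projT1 p) (ts k) (projT2 p) /\ eval LD (@no_var LD) (ts k) = lim_cls D p.
  by move=> k; have [i [x Hix]] := IH k; exists (existT _ i x).
have [ps' [j' [x0 [Hqs Hle Hin E]]]] := lim_op_spec F (fun k => eval LD (@no_var LD) (ts k)).
have [j [Hj Hcomp]] := computes_family ts ps ps' j' (fun k => proj1 (Hps k))
  (fun k => etrans (esym (proj2 (Hps k))) (Hqs k)).
exists j, (gamma j' j x0); split; last by rewrite /= E; exact: lim_cls_gamma.
apply: computes_app Hcomp _.
by rewrite -(app_gamma_comp Hle Hj); exact: ds_phi_rename Hj Hin.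
Qed.

Variables (M : algebra L) (realizable_M : forall i, realizable M (phi i)).

Lemma computes_lim_cls_eq k t1 t2 y1 y2 :
  computes k t1 y1 -> computes k t2 y2 ->
  lim_cls D (existT _ k y1) = lim_cls D (existT _ k y2) <->
  eval M (@no_var M) t1 = eval M (@no_var M) t2.
Proof.
move=> C1 C2; split.
  move=> /lim_cls_eqP [m [/= Hkm _ E]].
  have [s Hs] := realizable_M m.
  by rewrite (computes_eval Hs (computes_gamma Hkm C1)) E
    (computes_eval Hs (computes_gamma Hkm C2)).
have [s Hs] := realizable_M k.
rewrite (computes_eval Hs C1) (computes_eval Hs C2).
by case: (eqVneq y1 y2) => [-> // | /eqP /ds_diag_neq /Hs].
Qed.

Lemma limit_eval_eq t1 t2 :
  eval LD (@no_var LD) t1 = eval LD (@no_var LD) t2 <->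
  eval M (@no_var M) t1 = eval M (@no_var M) t2.
Proof.
have [i1 [x1 [C1 ->]]] := limit_eval_computes t1.
have [i2 [x2 [C2 ->]]] := limit_eval_computes t2.
have [k [H1 H2]] := ds_directed i1 i2.
rewrite (lim_cls_gamma x1 H1) (lim_cls_gamma x2 H2).
exact: computes_lim_cls_eq (computes_gamma H1 C1) (computes_gamma H2 C2).
Qed.

End DirectSystem.

Theorem mainTheorem14 (L : language) (A : algebra L) (B : algebra (expand A))
  (D : dsystem (expand A)) (hQ : inhabited (lim_carrier D)) :
  is_A_algebra A B ->
  is_direct_system D ->
  (forall i, realizable B (ds_phi D i)) ->
  is_A_algebra A (limit_algebra D hQ).
Proof.
move=> HB HD Hreal [[] t1 t2] /HB; rewrite /sentence_true /sat_lit /=.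
  by move/(limit_eval_eq _ _ HD hQ _ Hreal).
by move=> HneqB /(limit_eval_eq _ _ HD hQ _ Hreal).
Qed.
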